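(* Let $(X,\mathcal L,d)$ be a reduced Birkhoff--Beatley system whose vertical extension is drop complete, let $D\subseteq X$ be a nonempty convex set, and let $f,g\colon D\to\mathbb R$. Suppose that for all $n\in\mathbb N$ ($n\ge1$), all $x_0,x_1,\dots,x_n\in D$, all $x\in\operatorname{conv}\{x_1,\dots,x_n\}$ and all $t\in[0,1]$, $$f(c(t))\le(1-t)g(x_0)+t f(x),$$ where $c\colon[0,1]\to D$ is the standard parametrization of the segment $[x_0,x]$ (so $c(0)=x_0$, $c(1)=x$). Then there exists a segment convex function $\phi\colon D\to\mathbb R$ with $f\le\phi\le g$ on $D$.
   Context: A reduced Birkhoff--Beatley system is a triple $(X,\mathcal L,d)$ where $X$ is a set with at least two elements, $\mathcal L$ is a family of subsets of $X$ (lines), and $d\colon X^2\to\mathbb R$ is a function, such that: (i) any two distinct points lie in a unique line of $\mathcal L$; (ii) for each $\ell\in\mathcal L$ there is a bijection $c\colon\mathbb R\to\ell$ (a ruler) with $d(c(t),c(s))=|t-s|$. For $a,b,t\in X$, write $(atb)$ if $a,t,b$ are three distinct collinear points with $d(a,b)=d(a,t)+d(t,b)$. The segment $[a,b]$ is $\{a\}$ if $a=b$, and $\{t\mid (atb)\}\cup\{a,b\}$ otherwise. If $a\ne b$, $\ell$ is the line through them and $c$ a ruler for $\ell$ with $c(\alpha)=a$, $c(\beta)=b$, the standard parametrization of $[a,b]$ is $\tilde c\colon[0,1]\to[a,b]$, $\tilde c(t)=c((\beta-\alpha)t+\alpha)$; if $a=b$ it is the constant map $a$. A set $K$ is convex if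 $[a,b]\subseteq K$ for all $a,b\in K$; $\operatorname{conv}(H)$ is the intersection of all convex sets containing $H$. For a nonempty convex $D$, a function $\phi\colon D\to\mathbb R$ is segment convex if $\phi(c(t))\le(1-t)\phi(x_0)+t\phi(x_1)$ for all $x_0,x_1\in D$, $t\in[0,1]$, where $c$ is the standard parametrization of $[x_0,x_1]$. The system is drop complete if for every convex $K\subseteq X$ and every $x_0\in X$, $\operatorname{conv}(\{x_0\}\cup K)=\bigcup\{[x_0,x]\mid x\in K\}$. The vertical extension is $(X^*,\mathcal L^*,d^* )$ with $X^*=X\times\mathbb R$, $d^*((x_0,y_0),(x_1,y_1))=\sqrt{d(x_0,x_1)^2+(y_0-y_1)^2}$, and lines: for $(x_0,y_0)\ne(x_1,y_1)$ with $x_0\ne x_1$, taking a ruler $c$ of the line through $x_0,x_1$ with $c(s_0)=x_0,c(s_1)=x_1$ and $a=((s_0-s_1)^2+(y_0-y_1)^2)^{-1/2}$, the line $\{(c(at(s_1-s_0)+s_0),\,at(y_1-y_0)+y_0)\mid t\in\mathbb R\}$; for $x_0=x_1$, the line $\{x_0\}\times\mathbb R$. (It is itself a reduced Birkhoff--Beatley system, so segments, convexity and drop completeness make sense in it.) *)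

From Stdlib Require Import Reals.
Open Scope R_scope.

Section BB.
Context {X : Type} (L : (X -> Prop) -> Prop) (d : X -> X -> R).

Definition ruler (l : X -> Prop) (c : R -> X) : Prop :=
  (forall t, l (c t)) /\
  (forall x, l x -> exists t, c t = x) /\
  (forall t s, c t = c s -> t = s) /\
  (forall t s, d (c t) (c s) = Rabs (t - s)).

Definition BB_system : Prop :=
  (exists a b : X, a <> b) /\
  (forall a b : X, a <> b ->
     exists l, L l /\ l a /\ l b /\
       (forall l', L l' -> l' a -> l' b -> forall x, l' x <-> l x)) /\
  (forall l, L l -> exists c, ruler l c).

Definition collinear (a t b : X) : Prop :=
  exists l, L l /\ l a /\ l t /\ l b.

Definition between (a t b : X) : Prop :=
  a <> t /\ t <> b /\ a <> b /\ collinear a t b /\ d a b = d a t + d t b.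

Definition segment (a b : X) : X -> Prop :=
  fun t => t = a \/ t = b \/ between a t b.

Definition std_param (a b : X) (p : R -> X) : Prop :=
  (a = b /\ forall t, 0 <= t <= 1 -> p t = a) \/
  (a <> b /\ exists l c alpha beta,
      L l /\ l a /\ l b /\ ruler l c /\ c alpha = a /\ c beta = b /\
      forall t, 0 <= t <= 1 -> p t = c ((beta - alpha) * t + alpha)).

Definition convex (K : X -> Prop) : Prop :=
  forall a b, K a -> K b -> forall t, segment a b t -> K t.

Definition conv (H : X -> Prop) : X -> Prop :=
  fun x => forall K, convex K -> (forall y, H y -> K y) -> K x.

Definition segment_convex (D : X -> Prop) (phi : X -> R) : Prop :=
  forall x0 x1, D x0 -> D x1 -> forall p, std_param x0 x1 p ->
    forall t, 0 <= t <= 1 -> phi (p t) <= (1 - t) * phi x0 + t * phi x1.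

Definition drop_complete : Prop :=
  forall K, convex K -> (exists y, K y) -> forall x0 x,
    conv (fun y => y = x0 \/ K y) x <-> exists y, K y /\ segment x0 y x.

End BB.

Definition vert_dist {X : Type} (d : X -> X -> R) (p q : X * R) : R :=
  sqrt (d (fst p) (fst q) ^ 2 + (snd p - snd q) ^ 2).

Definition vert_lines {X : Type} (L : (X -> Prop) -> Prop) (d : X -> X -> R)
    (l : X * R -> Prop) : Prop :=
  exists x0 y0 x1 y1,
    (x0, y0) <> (x1, y1) /\
    ((x0 <> x1 /\
      exists ln c s0 s1, L ln /\ ln x0 /\ ln x1 /\ ruler d ln c /\
        c s0 = x0 /\ c s1 = x1 /\
        let a := / sqrt ((s0 - s1) ^ 2 + (y0 - y1) ^ 2) in
        forall p, l p <-> exists t,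
          p = (c (a * t * (s1 - s0) + s0), a * t * (y1 - y0) + y0))
     \/
     (x0 = x1 /\ forall p, l p <-> fst p = x0)).

From Stdlib Require Import Reals Lra List Classical ClassicalEpsilon.
Open Scope R_scope.

(** Let C be the convex hull, in the vertical extension X* = X x R, of the
    epigraph of g over D, and let phi be its lower envelope,
    phi z = inf { y | (z, y) in C }.  Then phi <= g since the epigraph lies
    in C, and phi is segment convex because C is convex and segments of X*
    are graphs of affine heights over standard parametrizations of X.
    The heart of the proof is that C stays above f: by drop completeness of
    X*, C is obtained by repeatedly joining a point of the epigraph of g to
    a point already obtained, and the two-point case (n = 1) of the
    hypothesis says precisely that such joins stay in the epigraph of f. *)

Lemma sqrt_scale (k A B : R) :
  sqrt ((k * A) ^ 2 + (k * B) ^ 2) = Rabs k * sqrt (A ^ 2 + B ^ 2).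
Proof.
  replace ((k * A) ^ 2 + (k * B) ^ 2) with (Rsqr k * (A ^ 2 + B ^ 2))
    by (unfold Rsqr; ring).
  rewrite sqrt_mult_alt by (apply Rle_0_sqr).
  now rewrite sqrt_Rsqr_abs.
Qed.

Lemma abs_additive_convex_comb (a b c : R) : a <> b ->
  Rabs (a - b) = Rabs (a - c) + Rabs (c - b) ->
  exists lam, 0 <= lam <= 1 /\ c = (1 - lam) * a + lam * b.
Proof.
  intros Hab Habs.
  exists ((c - a) / (b - a)).
  assert (E : (b - a) * ((c - a) / (b - a)) = c - a) by (field; lra).
  set (lam := (c - a) / (b - a)) in *.
  unfold Rabs in Habs; repeat destruct Rcase_abs in Habs;
    (split; [split; nra | nra]).
Qed.

Section Rulers.
Context {X : Type} {d : X -> X -> R} {l : X -> Prop} {c : R -> X}.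
Hypothesis Hc : ruler d l c.

Lemma ruler_dist s s' : d (c s) (c s') = Rabs (s - s').
Proof. apply Hc. Qed.

Lemma ruler_inj s s' : c s = c s' -> s = s'.
Proof. apply Hc. Qed.

Lemma ruler_on_line s : l (c s).
Proof. apply Hc. Qed.

End Rulers.

Section BasicFacts.
Context {X : Type} (L : (X -> Prop) -> Prop) (d : X -> X -> R).
Hypothesis HBB : BB_system L d.

(* Every point lies on some line, so the ruler axiom gives d x x = 0. *)
Lemma dist_self x : d x x = 0.
Proof.
  destruct HBB as [[a [b Hab]] [Hline Hruler]].
  assert (exists y, x <> y) as [y Hxy].
  { destruct (classic (x = a)) as [->|Hxa]; [exists b | exists a]; auto. }
  destruct (Hline x y Hxy) as [ln [HL [Hx _]]].
  destruct (Hruler ln HL) as [c Hc].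
  destruct (proj1 (proj2 Hc) x Hx) as [s <-].
  rewrite (ruler_dist Hc), Rminus_diag. apply Rabs_R0.
Qed.

Lemma std_param_of_ruler ln c al be :
  L ln -> ruler d ln c -> c al <> c be ->
  std_param L d (c al) (c be) (fun t => c ((be - al) * t + al)).
Proof.
  intros HL Hc Hne. right. split; [exact Hne|].
  exists ln, c, al, be.
  pose proof (ruler_on_line Hc) as Hon.
  do 6 (split; [auto|]). reflexivity.
Qed.

Lemma std_param_exists x0 x1 : exists p, std_param L d x0 x1 p.
Proof.
  destruct (classic (x0 = x1)) as [E|N].
  - exists (fun _ => x0). left. split; auto.
  - destruct HBB as [_ [Hline Hruler]].
    destruct (Hline x0 x1 N) as [ln [HL [H0 [H1 _]]]].
    destruct (Hruler ln HL) as [c Hc].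
    destruct (proj1 (proj2 Hc) x0 H0) as [al <-].
    destruct (proj1 (proj2 Hc) x1 H1) as [be <-].
    eexists. apply (std_param_of_ruler ln); auto.
Qed.

Lemma std_param_endpoints x0 x1 p :
  std_param L d x0 x1 p -> p 0 = x0 /\ p 1 = x1.
Proof.
  intros [[E Hp] | [_ [ln [c [al [be [_ [_ [_ [_ [Ha [Hb Hp]]]]]]]]]]]].
  - rewrite !Hp by lra. now subst.
  - rewrite !Hp by lra.
    replace ((be - al) * 0 + al) with al by ring.
    replace ((be - al) * 1 + al) with be by ring. auto.
Qed.

Lemma std_param_in_segment x0 x1 p t :
  std_param L d x0 x1 p -> 0 <= t <= 1 -> segment L d x0 x1 (p t).
Proof.
  intros Hp Ht. destruct (std_param_endpoints _ _ _ Hp) as [P0 P1].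
  destruct (Req_dec t 0) as [->|T0]; [now left|].
  destruct (Req_dec t 1) as [->|T1]; [now right; left|].
  destruct Hp as [[E Hp] | [N [ln [c [al [be [HL [Hl0 [Hl1 [Hc [Ha [Hb Hp]]]]]]]]]]]].
  - left. now apply Hp.
  - right; right. rewrite Hp by auto. subst x0 x1.
    assert (Nab : al <> be) by (intros ->; auto).
    repeat split; auto.
    + intros E. apply (ruler_inj Hc) in E. nra.
    + intros E. apply (ruler_inj Hc) in E. nra.
    + exists ln. pose proof (ruler_on_line Hc) as Hon. repeat split; auto.
    + rewrite !(ruler_dist Hc).
      replace (al - ((be - al) * t + al)) with ((be - al) * (- t)) by ring.
      replace ((be - al) * t + al - be) with ((be - al) * (t - 1)) by ring.
      replace (al - be) with ((be - al) * (-1)) by ring.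
      rewrite !Rabs_mult, (Rabs_left (-1)), (Rabs_left1 (- t)), (Rabs_left1 (t - 1))
        by lra.
      ring.
Qed.

End BasicFacts.

(** The vertical extension X* = X x R: its segments are exactly the graphs
    of affine height functions over standard parametrizations of X. *)

Section VerticalExtension.
Context {X : Type} (L : (X -> Prop) -> Prop) (d : X -> X -> R).
Hypothesis HBB : BB_system L d.

Notation LS := (vert_lines L d).
Notation dS := (vert_dist d).

Lemma vert_dist_fiber x a b : dS (x, a) (x, b) = Rabs (a - b).
Proof.
  unfold vert_dist; cbn [fst snd]. rewrite (dist_self L d HBB).
  replace (0 ^ 2 + (a - b) ^ 2) with (Rsqr (a - b)) by (unfold Rsqr; ring).
  apply sqrt_Rsqr_abs.
Qed.

Lemma fiber_segment x y0 y1 t : 0 <= t <= 1 ->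
  segment LS dS (x, y0) (x, y1) (x, (1 - t) * y0 + t * y1).
Proof.
  intros Ht.
  destruct (Req_dec t 0) as [->|T0]; [left; f_equal; ring|].
  destruct (Req_dec t 1) as [->|T1]; [right; left; f_equal; ring|].
  destruct (Req_dec y0 y1) as [<-|Ny]; [left; f_equal; ring|].
  right; right. split; [|split; [|split; [|split]]].
  - intros E; injection E as E.
    assert (Z : t * (y1 - y0) = 0) by lra.
    apply Rmult_integral in Z; lra.
  - intros E; injection E as E.
    assert (Z : (1 - t) * (y1 - y0) = 0) by lra.
    apply Rmult_integral in Z; lra.
  - intros E; injection E as E; lra.
  - exists (fun q => fst q = x). split; [|repeat split].
    exists x, y0, x, y1. split.
    + intros E; injection E as E; lra.
    + right. split; [reflexivity|tauto].
  - rewrite !vert_dist_fiber.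
    replace (y0 - ((1 - t) * y0 + t * y1)) with (t * (y0 - y1)) by ring.
    replace ((1 - t) * y0 + t * y1 - y1) with ((1 - t) * (y0 - y1)) by ring.
    rewrite !Rabs_mult, (Rabs_pos_eq t), (Rabs_pos_eq (1 - t)) by lra. ring.
Qed.

(* The lift of a ruler c: the affine path of X* over c joining height y0 at
   parameter s0 to height y1 at parameter s1.  Lines of X* that are not
   fibers are exactly the images of such lifts. *)
Definition lift (c : R -> X) (s0 s1 y0 y1 u : R) : X * R :=
  (c ((s1 - s0) * u + s0), (1 - u) * y0 + u * y1).

Lemma lift_speed_pos s0 s1 y0 y1 : s0 <> s1 ->
  0 < sqrt ((s1 - s0) ^ 2 + (y1 - y0) ^ 2).
Proof.
  intros Ns. apply sqrt_lt_R0.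
  assert (0 < Rsqr (s1 - s0)) by (apply Rsqr_pos_lt; lra).
  rewrite Rsqr_pow2 in *. pose proof (pow2_ge_0 (y1 - y0)). lra.
Qed.

(* The arc-length parametrization used in the definition of the lines of X*
   is a reparametrization of the lift. *)
Lemma vert_line_param_lift (c : R -> X) s0 s1 y0 y1 p : s0 <> s1 ->
  (exists t, p = (c (/ sqrt ((s0 - s1) ^ 2 + (y0 - y1) ^ 2) * t * (s1 - s0) + s0),
                  / sqrt ((s0 - s1) ^ 2 + (y0 - y1) ^ 2) * t * (y1 - y0) + y0))
  <-> exists u, p = lift c s0 s1 y0 y1 u.
Proof.
  intros Ns.
  replace ((s0 - s1) ^ 2 + (y0 - y1) ^ 2) with ((s1 - s0) ^ 2 + (y1 - y0) ^ 2) by ring.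
  pose proof (lift_speed_pos s0 s1 y0 y1 Ns) as Hpos.
  set (k := sqrt ((s1 - s0) ^ 2 + (y1 - y0) ^ 2)) in *.
  assert (Hk : / k * k = 1) by (field; lra).
  split; intros [u ->].
  - exists (/ k * u). unfold lift. f_equal; [f_equal|]; ring.
  - exists (u * k). unfold lift.
    replace (/ k * (u * k)) with (u * (/ k * k)) by ring.
    rewrite Hk, Rmult_1_r. f_equal; [f_equal|]; ring.
Qed.

Section Lift.
Context {ln : X -> Prop} {c : R -> X} (HL : L ln) (Hc : ruler d ln c).
Variables (s0 s1 y0 y1 : R).

Lemma lift_dist u v :
  dS (lift c s0 s1 y0 y1 u) (lift c s0 s1 y0 y1 v)
  = Rabs (u - v) * sqrt ((s1 - s0) ^ 2 + (y1 - y0) ^ 2).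
Proof.
  unfold vert_dist, lift; cbn [fst snd]. rewrite (ruler_dist Hc), pow2_abs.
  replace ((s1 - s0) * u + s0 - ((s1 - s0) * v + s0)) with ((u - v) * (s1 - s0))
    by ring.
  replace ((1 - u) * y0 + u * y1 - ((1 - v) * y0 + v * y1)) with ((u - v) * (y1 - y0))
    by ring.
  apply sqrt_scale.
Qed.

Lemma lift_inj u v : s0 <> s1 ->
  lift c s0 s1 y0 y1 u = lift c s0 s1 y0 y1 v -> u = v.
Proof.
  intros Ns E. injection E as E _. apply (ruler_inj Hc) in E.
  apply (Rmult_eq_reg_l (s1 - s0)); lra.
Qed.

Lemma lift_line : s0 <> s1 -> LS (fun p => exists u, p = lift c s0 s1 y0 y1 u).
Proof.
  intros Ns.
  assert (Nc : c s0 <> c s1) by (intros E; apply (ruler_inj Hc) in E; auto).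
  exists (c s0), y0, (c s1), y1. split; [intros E; injection E; auto|].
  left. split; [exact Nc|]. exists ln, c, s0, s1.
  pose proof (ruler_on_line Hc) as Hon.
  do 6 (split; [auto|]). cbv zeta. intros p.
  symmetry. now apply vert_line_param_lift.
Qed.

Lemma lift_segment t : s0 <> s1 -> 0 <= t <= 1 ->
  segment LS dS (lift c s0 s1 y0 y1 0) (lift c s0 s1 y0 y1 1) (lift c s0 s1 y0 y1 t).
Proof.
  intros Ns Ht.
  destruct (Req_dec t 0) as [->|T0]; [now left|].
  destruct (Req_dec t 1) as [->|T1]; [now right; left|].
  right; right. split; [|split; [|split; [|split]]].
  - intros E. apply lift_inj in E; auto.
  - intros E. apply lift_inj in E; auto.
  - intros E. apply lift_inj in E; auto. lra.
  - exists (fun p => exists u, p = lift c s0 s1 y0 y1 u).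
    split; [now apply lift_line|].
    split; [now exists 0|]. split; [now exists t|now exists 1].
  - rewrite !lift_dist.
    rewrite (Rabs_left1 (0 - 1)), (Rabs_left1 (0 - t)), (Rabs_left1 (t - 1)) by lra.
    ring.
Qed.

Lemma lift_convex_comb uP uQ lam : exists p,
  std_param L d (fst (lift c s0 s1 y0 y1 uP)) (fst (lift c s0 s1 y0 y1 uQ)) p /\
  lift c s0 s1 y0 y1 ((1 - lam) * uP + lam * uQ)
  = (p lam, (1 - lam) * snd (lift c s0 s1 y0 y1 uP)
            + lam * snd (lift c s0 s1 y0 y1 uQ)).
Proof.
  unfold lift; cbn [fst snd].
  set (a := (s1 - s0) * uP + s0). set (b := (s1 - s0) * uQ + s0).
  replace ((s1 - s0) * ((1 - lam) * uP + lam * uQ) + s0) with ((b - a) * lam + a)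
    by (unfold a, b; ring).
  destruct (classic (c a = c b)) as [E|N].
  - apply (ruler_inj Hc) in E. rewrite <- E, Rminus_diag, Rmult_0_l, Rplus_0_l.
    exists (fun _ => c a). split; [left; split; [rewrite E|]; auto|].
    f_equal. ring.
  - exists (fun t => c ((b - a) * t + a)).
    split; [now apply std_param_of_ruler with ln|]. f_equal. ring.
Qed.

Lemma lift_between_descends uP uZ uQ x0 x1 z y0' y1' y : s0 <> s1 -> uP <> uQ ->
  (x0, y0') = lift c s0 s1 y0 y1 uP -> (z, y) = lift c s0 s1 y0 y1 uZ ->
  (x1, y1') = lift c s0 s1 y0 y1 uQ ->
  dS (x0, y0') (x1, y1') = dS (x0, y0') (z, y) + dS (z, y) (x1, y1') ->
  exists p lam, std_param L d x0 x1 p /\ 0 <= lam <= 1 /\ z = p lam /\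
    y = (1 - lam) * y0' + lam * y1'.
Proof.
  intros Ns NPQ EP EZ EQ Hd.
  rewrite EP, EZ, EQ, !lift_dist in Hd.
  pose proof (lift_speed_pos s0 s1 y0 y1 Ns) as Hpos.
  assert (Hd' : Rabs (uP - uQ) = Rabs (uP - uZ) + Rabs (uZ - uQ)).
  { apply (Rmult_eq_reg_r (sqrt ((s1 - s0) ^ 2 + (y1 - y0) ^ 2))); lra. }
  destruct (abs_additive_convex_comb _ _ _ NPQ Hd') as [lam [Hlam EuZ]].
  destruct (lift_convex_comb uP uQ lam) as [p [Hp Ep]].
  rewrite <- EuZ, <- EZ, <- EP, <- EQ in Ep. rewrite <- EP, <- EQ in Hp.
  injection Ep as Ez Ey. exists p, lam. auto.
Qed.

End Lift.

Lemma std_param_lifts_to_segment x0 x1 y0 y1 p t :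
  std_param L d x0 x1 p -> 0 <= t <= 1 ->
  segment LS dS (x0, y0) (x1, y1) (p t, (1 - t) * y0 + t * y1).
Proof.
  intros Hp Ht.
  destruct Hp as [[<- Hp] | [N [ln [c [al [be [HL [_ [_ [Hc [<- [<- Hp]]]]]]]]]]]].
  - rewrite Hp by auto. now apply fiber_segment.
  - rewrite Hp by auto.
    assert (Nab : al <> be) by (intros ->; auto).
    replace (c al, y0) with (lift c al be y0 y1 0) by (unfold lift; f_equal; [f_equal|]; ring).
    replace (c be, y1) with (lift c al be y0 y1 1) by (unfold lift; f_equal; [f_equal|]; ring).
    now apply (lift_segment HL Hc).
Qed.

Lemma segment_descends_to_std_param x0 x1 y0 y1 z y :
  segment LS dS (x0, y0) (x1, y1) (z, y) ->
  exists p lam, std_param L d x0 x1 p /\ 0 <= lam <= 1 /\ z = p lam /\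
    y = (1 - lam) * y0 + lam * y1.
Proof.
  intros [E | [E | [NPZ [NZQ [NPQ [[ls [Hls [HlP [HlZ HlQ]]]] Hd]]]]]].
  - injection E as Ez Ey. subst z y.
    destruct (std_param_exists L d HBB x0 x1) as [p Hp].
    destruct (std_param_endpoints L d _ _ _ Hp) as [P0 _].
    exists p, 0. repeat split; auto; lra.
  - injection E as Ez Ey. subst z y.
    destruct (std_param_exists L d HBB x0 x1) as [p Hp].
    destruct (std_param_endpoints L d _ _ _ Hp) as [_ P1].
    exists p, 1. repeat split; auto; lra.
  - destruct Hls as [a0 [b0 [a1 [b1 [_ [[Na Hline] | [_ Hl]]]]]]].
    + destruct Hline as [ln [c [s0 [s1 [HL [_ [_ [Hc [Hc0 [Hc1 Hl]]]]]]]]]].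
      assert (Ns : s0 <> s1) by (intros ->; apply Na; congruence).
      assert (Hlift : forall q, ls q <-> exists u, q = lift c s0 s1 b0 b1 u).
      { intros q. rewrite Hl. now apply vert_line_param_lift. }
      destruct (proj1 (Hlift _) HlP) as [uP EP].
      destruct (proj1 (Hlift _) HlZ) as [uZ EZ].
      destruct (proj1 (Hlift _) HlQ) as [uQ EQ].
      assert (NuPQ : uP <> uQ) by (intros ->; apply NPQ; congruence).
      now apply (lift_between_descends HL Hc s0 s1 b0 b1 uP uZ uQ).
    + apply Hl in HlP, HlZ, HlQ. cbn [fst] in HlP, HlZ, HlQ. subst x0 z x1.
      rewrite !vert_dist_fiber in Hd.
      assert (Ny : y0 <> y1) by (intros ->; now apply NPQ).
      destruct (abs_additive_convex_comb _ _ _ Ny Hd) as [lam [Hlam Ey]].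
      exists (fun _ => a0), lam. split; [left; split; auto|auto].
Qed.

End VerticalExtension.

Section Hulls.
Context {Y : Type} (LY : (Y -> Prop) -> Prop) (dY : Y -> Y -> R).

Lemma conv_incl (A : Y -> Prop) y : A y -> conv LY dY A y.
Proof. intros Hy K _ HA. auto. Qed.

Lemma conv_least (A K : Y -> Prop) : convex LY dY K -> (forall y, A y -> K y) ->
  forall y, conv LY dY A y -> K y.
Proof. intros HK HA y Hy. now apply Hy. Qed.

Lemma conv_mono (A B : Y -> Prop) : (forall y, A y -> B y) ->
  forall y, conv LY dY A y -> conv LY dY B y.
Proof. intros HAB y Hy K HK HB. apply Hy; auto. Qed.

Lemma conv_convex (A : Y -> Prop) : convex LY dY (conv LY dY A).
Proof. intros a b Ha Hb t Ht K HK HA. apply (HK a b); [apply Ha | apply Hb | ..]; auto. Qed.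

(* Segments with equal endpoints are points, so singletons are convex. *)
Lemma convex_singleton (a : Y) : convex LY dY (fun y => y = a).
Proof. intros u v -> -> t [E | [E | [_ [_ [N _]]]]]; auto. contradiction. Qed.

(* Every point of a hull already lies in the hull of finitely many of the
   generating points, since the union of these finite hulls is convex. *)
Lemma conv_finite (A : Y -> Prop) y : conv LY dY A y ->
  exists ps, (forall a, In a ps -> A a) /\ conv LY dY (fun a => In a ps) y.
Proof.
  revert y.
  apply (conv_least A (fun y => exists ps, (forall a, In a ps -> A a) /\
                                 conv LY dY (fun a => In a ps) y)).
  - intros a b [ps1 [A1 H1]] [ps2 [A2 H2]] t Ht.
    exists (ps1 ++ ps2). split.
    + intros w Hw. apply in_app_or in Hw as [Hw | Hw]; auto.
    + apply (conv_convex _ a b); auto;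
        [apply (conv_mono (fun w => In w ps1)) | apply (conv_mono (fun w => In w ps2))];
        auto; intros; apply in_or_app; auto.
  - intros w Hw. exists (w :: nil). split.
    + intros a [<- | []]. exact Hw.
    + apply conv_incl. now left.
Qed.

Lemma drop_complete_hull_ind (Hdc : drop_complete LY dY) (A P : Y -> Prop) :
  (forall a, A a -> P a) ->
  (forall a w z, A a -> P w -> segment LY dY a w z -> P z) ->
  forall y, conv LY dY A y -> P y.
Proof.
  intros HA Hjoin y Hy.
  destruct (conv_finite A y Hy) as [ps [Hps Hy']]. clear Hy.
  revert Hps y Hy'. induction ps as [|a ps IH]; intros Hps y Hy.
  - exfalso. apply (conv_least _ (fun _ => False)) in Hy; auto.
    intros u v [].
  - destruct ps as [|b ps'].
    + assert (y = a) as ->.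
      { apply (conv_least _ (fun w => w = a)) in Hy; auto using convex_singleton.
        intros w [<- | []]. reflexivity. }
      apply HA, Hps. now left.
    + set (K := conv LY dY (fun w => In w (b :: ps'))).
      assert (Hy' : conv LY dY (fun w => w = a \/ K w) y).
      { apply (conv_mono (fun w => In w (a :: b :: ps'))); auto.
        intros w [<- | Hw]; [now left | right; now apply conv_incl]. }
      apply Hdc in Hy' as [w [Kw Hw]];
        [| apply conv_convex | exists b; apply conv_incl; now left].
      apply (Hjoin a w y); auto.
      * apply Hps. now left.
      * apply IH; auto. intros u Hu. apply Hps. now right.
Qed.

End Hulls.

Lemma pointwise_infimum {X : Type} (D : X -> Prop) (S : X -> R -> Prop) (lb : X -> R) :
  (forall z y, D z -> S z y -> lb z <= y) -> (forall z, D z -> exists y, S z y) ->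
  exists phi : X -> R, forall z, D z ->
    lb z <= phi z /\ (forall y, S z y -> phi z <= y) /\
    (forall eps, 0 < eps -> exists y, S z y /\ y < phi z + eps).
Proof.
  intros Hlb Hne.
  assert (Hsup : forall z, exists m, D z -> is_lub (fun v => S z (- v)) m).
  { intros z. destruct (classic (D z)) as [Dz | NDz]; [|exists 0; tauto].
    destruct (Hne z Dz) as [y0 Hy0].
    destruct (completeness (fun v => S z (- v))) as [m Hm].
    - exists (- lb z). intros v Hv. specialize (Hlb z _ Dz Hv). lra.
    - exists (- y0). now rewrite Ropp_involutive.
    - now exists m. }
  destruct (choice _ Hsup) as [sup Hsup'].
  exists (fun z => - sup z). intros z Dz. destruct (Hsup' z Dz) as [Hub Hleast].
  split; [|split].
  - assert (sup z <= - lb z); [|lra].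
    apply Hleast. intros v Hv. specialize (Hlb z _ Dz Hv). lra.
  - intros y Hy. assert (- y <= sup z); [|lra].
    apply Hub. now rewrite Ropp_involutive.
  - intros eps Heps. apply NNPP. intros Hno.
    assert (sup z <= sup z - eps); [|lra].
    apply Hleast. intros v Hv. apply Rnot_lt_le. intros Hlt.
    apply Hno. exists (- v). split; [exact Hv | lra].
Qed.

(* The lower envelope of a convex subset of the vertical extension is a
   segment convex function: convexity of C in X* is convexity of phi. *)
Lemma lower_envelope_segment_convex {X : Type} (L : (X -> Prop) -> Prop) (d : X -> X -> R)
  (HBB : BB_system L d) (D : X -> Prop) (C : X * R -> Prop) (phi : X -> R) :
  convex L d D -> convex (vert_lines L d) (vert_dist d) C ->
  (forall z y, D z -> C (z, y) -> phi z <= y) ->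
  (forall z eps, D z -> 0 < eps -> exists y, C (z, y) /\ y < phi z + eps) ->
  segment_convex L d D phi.
Proof.
  intros HDc HC Hbelow Happrox x0 x1 D0 D1 p Hp t Ht.
  assert (Dpt : D (p t)).
  { apply (HDc x0 x1 D0 D1). now apply (std_param_in_segment L d). }
  apply Rnot_gt_le. intros Hgt.
  set (eps := (phi (p t) - ((1 - t) * phi x0 + t * phi x1)) / 2).
  assert (Heps : 0 < eps) by (unfold eps; lra).
  destruct (Happrox x0 eps D0 Heps) as [y0 [C0 L0]].
  destruct (Happrox x1 eps D1 Heps) as [y1 [C1 L1]].
  assert (Cpt : C (p t, (1 - t) * y0 + t * y1)).
  { apply (HC (x0, y0) (x1, y1) C0 C1). now apply (std_param_lifts_to_segment L d HBB). }
  specialize (Hbelow _ _ Dpt Cpt).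
  assert ((1 - t) * y0 <= (1 - t) * (phi x0 + eps)) by (apply Rmult_le_compat_l; lra).
  assert (t * y1 <= t * (phi x1 + eps)) by (apply Rmult_le_compat_l; lra).
  unfold eps in *. lra.
Qed.

Definition epigraph {X : Type} (D : X -> Prop) (h : X -> R) (Z : X * R) : Prop :=
  D (fst Z) /\ h (fst Z) <= snd Z.

Section Sandwich.
Context {X : Type} (L : (X -> Prop) -> Prop) (d : X -> X -> R).
Hypothesis HBB : BB_system L d.
Variable D : X -> Prop.
Hypothesis HDc : convex L d D.
Variables f g : X -> R.
(* The two-point case of the hypothesis of the theorem. *)
Hypothesis Hfg : forall x0 x p t, D x0 -> D x -> std_param L d x0 x p -> 0 <= t <= 1 ->
  f (p t) <= (1 - t) * g x0 + t * f x.

(* Taking x = x0 and t = 0 in the hypothesis gives f <= g. *)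
Lemma f_le_g x : D x -> f x <= g x.
Proof.
  intros Dx.
  assert (Hp : std_param L d x x (fun _ => x)) by (left; split; auto).
  pose proof (Hfg x x _ 0 Dx Dx Hp) as Hx. lra.
Qed.

Lemma join_stays_above_f a w z : epigraph D g a -> epigraph D f w ->
  segment (vert_lines L d) (vert_dist d) a w z -> epigraph D f z.
Proof.
  destruct a as [x0 y0], w as [x w], z as [z y].
  intros [D0 G0] [Dx Fx] Hs. cbn [fst snd] in *.
  destruct (segment_descends_to_std_param L d HBB _ _ _ _ _ _ Hs)
    as [p [lam [Hp [Hlam [-> ->]]]]].
  split; cbn [fst snd].
  - apply (HDc x0 x D0 Dx). now apply (std_param_in_segment L d).
  - pose proof (Hfg x0 x p lam D0 Dx Hp Hlam).
    assert (0 <= (1 - lam) * (y0 - g x0)) by (apply Rmult_le_pos; lra).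
    assert (0 <= lam * (w - f x)) by (apply Rmult_le_pos; lra).
    lra.
Qed.

Lemma hull_epigraph_above_f (Hdc : drop_complete (vert_lines L d) (vert_dist d)) Z :
  conv (vert_lines L d) (vert_dist d) (epigraph D g) Z -> epigraph D f Z.
Proof.
  apply (drop_complete_hull_ind _ _ Hdc).
  - intros [x y] [Dx Gx]. split; [exact Dx|]. cbn in *. pose proof (f_le_g x Dx). lra.
  - exact join_stays_above_f.
Qed.

End Sandwich.

Theorem theorem1 (X : Type) (L : (X -> Prop) -> Prop) (d : X -> X -> R)
  (HBB : BB_system L d)
  (Hdc : drop_complete (vert_lines L d) (vert_dist d))
  (D : X -> Prop) (HDne : exists x, D x) (HDc : convex L d D)
  (f g : X -> R)
  (H : forall (n : nat), (1 <= n)%nat -> forall xs : nat -> X,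
        (forall i, (i <= n)%nat -> D (xs i)) ->
        forall x, conv L d (fun y => exists i, (1 <= i <= n)%nat /\ y = xs i) x ->
        forall p, std_param L d (xs O) x p ->
        forall t, 0 <= t <= 1 ->
          f (p t) <= (1 - t) * g (xs O) + t * f x) :
  exists phi : X -> R, segment_convex L d D phi /\
    (forall x, D x -> f x <= phi x /\ phi x <= g x).
Proof.
  (* Only the case n = 1 of the hypothesis is needed. *)
  assert (Hfg : forall x0 x p t, D x0 -> D x -> std_param L d x0 x p -> 0 <= t <= 1 ->
            f (p t) <= (1 - t) * g x0 + t * f x).
  { intros x0 x p t D0 Dx Hp Ht.
    apply (H 1%nat (le_n 1) (fun i => match i with O => x0 | _ => x end)); auto.
    - intros [|i] _; auto.
    - apply conv_incl. now exists 1%nat. }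
  set (C := conv (vert_lines L d) (vert_dist d) (epigraph D g)).
  assert (HgC : forall z, D z -> C (z, g z)) by (intros z Dz; apply conv_incl; split; cbn; [exact Dz | lra]).
  destruct (pointwise_infimum D (fun z y => C (z, y)) f) as [phi Hphi].
  - intros z y _ Hzy. exact (proj2 (hull_epigraph_above_f L d HBB D HDc f g Hfg Hdc _ Hzy)).
  - intros z Dz. exists (g z). now apply HgC.
  - exists phi. split.
    + apply (lower_envelope_segment_convex L d HBB D C); auto.
      * apply conv_convex.
      * intros z y Dz. apply Hphi, Dz.
      * intros z eps Dz. apply Hphi, Dz.
    + intros x Dx. split; apply Hphi; auto.
Qed.
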